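(* Let $\mathcal{N}$ be a finite set of polyphase nodes, each with the same finite set of phases $\mathcal{P}$, and let the branch graph $\mathcal{B}=(\mathcal{N},\mathcal{L})$, $\mathcal{L}\subseteq\mathcal{N}\times\mathcal{N}$, be weakly connected. Assume: (i) every branch $\ell\in\mathcal{L}$ has a complex $|\mathcal{P}|\times|\mathcal{P}|$ compound impedance matrix $Z_\ell$ with $Z_\ell=Z_\ell^{T}$, $Z_\ell$ invertible with $Y_\ell:=Z_\ell^{-1}$, and $\mathrm{Re}\{Z_\ell\}\succ 0$ (positive definite); (ii) every shunt $t\in\mathcal{T}$ (one per node) has a complex $|\mathcal{P}|\times|\mathcal{P}|$ compound admittance matrix $Y_t$ which is either $0$ or satisfies $Y_t=Y_t^{T}$, $Y_t$ invertible, and $\mathrm{Re}\{Y_t\}\succeq 0$. Let $Y=(A_{\mathcal{B}}^{\mathcal{P}})^{T}Y_{\mathcal{L}}A_{\mathcal{B}}^{\mathcal{P}}+Y_{\mathcal{T}}$ be the compound admittance matrix, and let $V,I\in\mathbb{C}^{|\mathcal{N}||\mathcal{P}|}$ satisfy $I=YV$. Let $\mathcal{Z}\subsetneq\mathcal{N}$, $\mathcal{Z}\neq\emptyset$, be such that $I_{\mathcal{Z}}=0$, and let $\mathcal{Z}^{\complement}:=\mathcal{N}\setminus\mathcal{Z}$. Then $Y_{\mathcal{Z}\times\mathcal{Z}}$ is invertible, $$V_{\mathcal{Z}}=-Y_{\mathcal{Z}\times\mathcal{Z}}^{-1}Y_{\mathcal{Z}\times\mathcal{Z}^{\complement}}V_{\mathcal{Z}^{\complement}},$$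 and $$I_{\mathcal{Z}^{\complement}}=(Y/Y_{\mathcal{Z}\times\mathcal{Z}})\,V_{\mathcal{Z}^{\complement}},\qquad Y/Y_{\mathcal{Z}\times\mathcal{Z}}:=Y_{\mathcal{Z}^{\complement}\times\mathcal{Z}^{\complement}}-Y_{\mathcal{Z}^{\complement}\times\mathcal{Z}}Y_{\mathcal{Z}\times\mathcal{Z}}^{-1}Y_{\mathcal{Z}\times\mathcal{Z}^{\complement}}.$$
   Context: Model of a polyphase power grid with an effectively grounded neutral conductor (neutral-to-ground voltage zero, connected to the reference points of all sources), so phase-to-ground voltages describe the system. $V_{n,p}$ and $I_{n,p}$ denote the complex phasors of the phase-to-ground voltage and injected current in phase $p$ of node $n$; $V_n=\mathrm{col}_{p\in\mathcal{P}}(V_{n,p})$, $V=\mathrm{col}_{n\in\mathcal{N}}(V_n)$, and similarly $I_n$, $I$. The shunts are $\mathcal{T}=\mathcal{N}\times\{\mathcal{G}\}$ where $\mathcal{G}$ is the ground node (one shunt from each node to ground). $A_{\mathcal{B}}$ is the edge-to-vertex incidence matrix of the directed graph $\mathcal{B}$ (row for branch $\ell=(m,n)$ has $+1$ in column $m$, $-1$ in column $n$, zeros elsewhere); $A_{\mathcal{B}}^{\mathcal{P}}:=A_{\mathcal{B}}\otimes I_{|\mathcal{P}|}$ (Kronecker product with the $|\mathcal{P}|\times|\mathcal{P}|$ identity). $Y_{\mathcal{L}}:=\mathrm{diag}_{\ell\in\mathcal{L}}(Y_\ell)$ and $Y_{\mathcal{T}}:=\mathrm{diag}_{t\in\mathcal{T}}(Y_t)$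 are block-diagonal. For disjoint node subsets $\mathcal{A},\mathcal{B}'\subseteq\mathcal{N}$, $I_{\mathcal{A}}$, $V_{\mathcal{B}'}$ and $Y_{\mathcal{A}\times\mathcal{B}'}$ denote the corresponding sub-blocks (all phases of the nodes in those sets). $\succ 0$ / $\succeq 0$ denote positive definite / semidefinite. *)

(* Complex numbers: an arbitrary numClosedFieldType C
   (e.g. algC); 'Re is the real part. *)
From HB Require Import structures.
From mathcomp Require Import all_boot all_order all_algebra.
Set Implicit Arguments. Unset Strict Implicit. Unset Printing Implicit Defensive.
Import Order.TTheory GRing.Theory Num.Theory.
Local Open Scope ring_scope.

(* Split a global index k : 'I_(m*p) into (node, phase). *)
Definition gsplit (m p : nat) (k : 'I_(m * p)) : 'I_m * 'I_p :=
  enum_val (cast_ord (esym (mxvec_cast m p)) k).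

Definition kron_id (R : pzRingType) (r s p : nat) (A : 'M[R]_(r, s)) : 'M[R]_(r * p, s * p) :=
  \matrix_(k, l) (A (gsplit k).1 (gsplit l).1 * ((gsplit k).2 == (gsplit l).2)%:R).

Definition blkdiag (R : pzRingType) (m p : nat) (F : 'I_m -> 'M[R]_p) : 'M[R]_(m * p) :=
  \matrix_(k, l) (((gsplit k).1 == (gsplit l).1)%:R * F (gsplit k).1 (gsplit k).2 (gsplit l).2).

Definition incidence (R : pzRingType) (n : nat) (L : {set 'I_n * 'I_n}) : 'M[R]_(#|L|, n) :=
  \matrix_(l, j) ((j == (enum_val l).1)%:R - (j == (enum_val l).2)%:R).

Definition admittance (C : numClosedFieldType) (n p : nat) (L : {set 'I_n * 'I_n})
  (Zl : 'I_n * 'I_n -> 'M[C]_p) (Yt : 'I_n -> 'M[C]_p) : 'M[C]_(n * p) :=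
  (kron_id p (incidence C L))^T
    *m blkdiag (fun l : 'I_#|L| => invmx (Zl (enum_val l)))
    *m kron_id p (incidence C L)
  + blkdiag Yt.

(* Global index of (k-th element of S, phase) for a node set S. *)
Definition sidx (n p : nat) (S : {set 'I_n}) (k : 'I_(#|S| * p)) : 'I_(n * p) :=
  mxvec_index (enum_val (gsplit k).1) (gsplit k).2.

Definition subblock (R : Type) (n p : nat) (S W : {set 'I_n}) (M : 'M[R]_(n * p)) :
  'M[R]_(#|S| * p, #|W| * p) := mxsub (@sidx n p S) (@sidx n p W) M.

Definition subvec (R : Type) (n p : nat) (S : {set 'I_n}) (v : 'cV[R]_(n * p)) :
  'cV[R]_(#|S| * p) := rowsub (@sidx n p S) v.

Definition mxRe (C : numClosedFieldType) (r s : nat) (M : 'M[C]_(r, s)) : 'M[C]_(r, s) :=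
  map_mx (fun z => 'Re z) M.

Definition posdef (C : numClosedFieldType) (p : nat) (M : 'M[C]_p) : Prop :=
  (forall i j, M i j \is Num.real) /\ M^T = M /\
  forall x : 'cV[C]_p, (forall i, x i 0 \is Num.real) -> x != 0 -> 0 < (x^T *m M *m x) 0 0.

Definition possemidef (C : numClosedFieldType) (p : nat) (M : 'M[C]_p) : Prop :=
  (forall i j, M i j \is Num.real) /\ M^T = M /\
  forall x : 'cV[C]_p, (forall i, x i 0 \is Num.real) -> 0 <= (x^T *m M *m x) 0 0.

Definition weakly_connected (n : nat) (L : {set 'I_n * 'I_n}) : Prop :=
  forall i j : 'I_n, connect [rel a b | ((a, b) \in L) || ((b, a) \in L)] i j.

From HB Require Import structures.
From mathcomp Require Import all_boot all_order all_algebra.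
From mathcomp Require Import ring.
Set Implicit Arguments. Unset Strict Implicit. Unset Printing Implicit Defensive.
Import Order.TTheory GRing.Theory Num.Theory.
Local Open Scope ring_scope.

(* The heart of the statement is that Y_ZZ is invertible; the two
   formulas then follow by eliminating V_Z from the block equation
   0 = I_Z = Y_(Z x Z) V_Z + Y_(Z x Z^c) V_(Z^c) (Schur complement algebra).

   Invertibility is proved by an energy argument.  For the Hermitian form
   h(M, u) = u^H M u one has the identity
     h(Y, v) = sum_branches h(Z_l^-1, v_a - v_b) + sum_nodes h(Y_t, v_t),
   and, Z_l and Y_t being complex symmetric, Re h(Z_l^-1, w) > 0 for w <> 0
   (because Re Z_l is positive definite) and Re h(Y_t, w) >= 0.  If
   Y_ZZ x = 0, extend x by zero to a network voltage v; then h(Y, v) = 0,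
   so every branch voltage drop vanishes, and by weak connectivity all node
   voltages coincide.  Since some node lies outside Z, where v is zero,
   v = 0 and hence x = 0. *)

Lemma gsplitK (m p : nat) (i : 'I_m) (q : 'I_p) : gsplit (mxvec_index i q) = (i, q).
Proof. by rewrite /gsplit /mxvec_index cast_ordK enum_rankK. Qed.

Lemma gsplitV (m p : nat) (k : 'I_(m * p)) : mxvec_index (gsplit k).1 (gsplit k).2 = k.
Proof. by case/mxvec_indexP: k => i q; rewrite gsplitK. Qed.

Lemma sum_mxvec (R : nmodType) (m p : nat) (F : 'I_(m * p) -> R) :
  \sum_k F k = \sum_i \sum_q F (mxvec_index i q).
Proof.
rewrite pair_big /= (reindex (fun ij : 'I_m * 'I_p => mxvec_index ij.1 ij.2)) //=.
by exists (@gsplit m p) => [[i q] _ | k _]; rewrite ?gsplitK ?gsplitV.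
Qed.

Lemma sidxE (n p : nat) (S : {set 'I_n}) (i : 'I_#|S|) (q : 'I_p) :
  @sidx n p S (mxvec_index i q) = mxvec_index (enum_val i) q.
Proof. by rewrite /sidx gsplitK. Qed.

Lemma sum_sidx (R : nmodType) (n p : nat) (S : {set 'I_n}) (F : 'I_(n * p) -> R) :
  \sum_k F (@sidx n p S k) = \sum_(a in S) \sum_q F (mxvec_index a q).
Proof.
rewrite sum_mxvec (big_enum_val (fun a => \sum_q F (mxvec_index a q))) /=.
by apply: eq_bigr => i _; apply: eq_bigr => q _; rewrite sidxE.
Qed.

Lemma sum_split (R : nmodType) (n p : nat) (S : {set 'I_n}) (F : 'I_(n * p) -> R) :
  \sum_k F k = \sum_k F (@sidx n p S k) + \sum_k F (@sidx n p (~: S) k).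
Proof.
rewrite !sum_sidx sum_mxvec (bigID (fun a => a \in S)) /=.
by congr (_ + _); apply: eq_bigl => a; rewrite in_setC.
Qed.

Lemma sidx_inj (n p : nat) (S : {set 'I_n}) : injective (@sidx n p S).
Proof.
move=> k k' /(congr1 (@gsplit n p)); rewrite /sidx !gsplitK => -[/enum_val_inj e1 e2].
by rewrite -(gsplitV k) -(gsplitV k') e1 e2.
Qed.

Lemma sidx_disj (n p : nat) (S : {set 'I_n}) k k' : @sidx n p S k != @sidx n p (~: S) k'.
Proof.
apply/eqP => /(congr1 (@gsplit n p)); rewrite /sidx !gsplitK => -[e _].
by have := enum_valP (gsplit k').1; rewrite -e in_setC (enum_valP (gsplit k).1).
Qed.

Lemma subvec_mul (R : pzRingType) (n p : nat) (S : {set 'I_n}) (M : 'M[R]_(n * p)) v :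
  subvec S (M *m v) = subblock S S M *m subvec S v + subblock S (~: S) M *m subvec (~: S) v.
Proof.
apply/matrixP => i j; rewrite /subvec /subblock /mxsub !mxE (sum_split S).
by congr (_ + _); apply: eq_bigr => k _; rewrite !mxE.
Qed.

Lemma dot_split (R : pzRingType) n p (S : {set 'I_n}) (a b : 'cV[R]_(n * p)) :
  (a^T *m b) 0 0 = ((subvec S a)^T *m subvec S b) 0 0
                 + ((subvec (~: S) a)^T *m subvec (~: S) b) 0 0.
Proof. by rewrite !mxE (sum_split S); congr (_ + _); apply: eq_bigr => k _; rewrite !mxE. Qed.

Section ZeroExtension.
Variables (R : pzRingType) (n p : nat) (S : {set 'I_n}).

Definition zext (x : 'cV[R]_(#|S| * p)) : 'cV[R]_(n * p) :=
  \col_k (if [pick k' | @sidx n p S k' == k] is Some k' then x k' 0 else 0).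

Lemma subvec_zext x : subvec S (zext x) = x.
Proof.
apply/matrixP => k j; rewrite (ord1 j) !mxE.
by case: pickP => [k' /eqP /sidx_inj -> // | /(_ k)]; rewrite eqxx.
Qed.

Lemma subvecC_zext x : subvec (~: S) (zext x) = 0.
Proof.
apply/matrixP => k j; rewrite !mxE.
by case: pickP => [k' /eqP e | //]; have := @sidx_disj n p S k' k; rewrite e eqxx.
Qed.

End ZeroExtension.

Section HermitianForm.
Variable C : numClosedFieldType.

Definition hf (m : nat) (M : 'M[C]_m) (u : 'cV[C]_m) : C :=
  ((map_mx Num.conj u)^T *m M *m u) 0 0.

Lemma hfE m (M : 'M[C]_m) u : hf M u = \sum_i \sum_j (u i 0)^* * M i j * u j 0.
Proof.
rewrite /hf mxE; under eq_bigr => j _ do rewrite mxE mulr_suml.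
by rewrite exchange_big; apply: eq_bigr => i _; apply: eq_bigr => j _; rewrite !mxE.
Qed.

Lemma hfD m (M1 M2 : 'M[C]_m) u : hf (M1 + M2) u = hf M1 u + hf M2 u.
Proof. by rewrite /hf mulmxDr mulmxDl mxE. Qed.

Lemma hf0 m (u : 'cV[C]_m) : hf 0 u = 0.
Proof. by rewrite /hf mulmx0 mul0mx mxE. Qed.

Lemma hfv0 m (M : 'M[C]_m) : hf M 0 = 0.
Proof. by rewrite /hf mulmx0 mxE. Qed.

Lemma hf_Re m (M : 'M[C]_m) u : M^T = M -> 'Re (hf M u) = hf (mxRe M) u.
Proof.
move=> MT; have sym i j : M j i = M i j by rewrite -{1}MT mxE.
rewrite [LHS]ReE.
have -> : (hf M u)^* = \sum_i \sum_j (u i 0)^* * (M i j)^* * u j 0.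
  rewrite hfE rmorph_sum exchange_big /=; apply: eq_bigr => i _.
  rewrite rmorph_sum; apply: eq_bigr => j _; rewrite !rmorphM /= conjCK sym; ring.
rewrite [RHS]hfE hfE -big_split mulr_suml; apply: eq_bigr => i _.
by rewrite -big_split mulr_suml; apply: eq_bigr => j _; rewrite /= !mxE ReE; ring.
Qed.

Lemma conj_mul_expand (c d r : C) : c^* * r * d = 'Re c * r * 'Re d + 'Im c * r * 'Im d
  + 'i * ('Re c * r * 'Im d - 'Im c * r * 'Re d).
Proof.
have ii : 'i * 'i = -1 :> C by rewrite -expr2 sqrCi.
rewrite {1}[c]Crect {1}[d]Crect rmorphD rmorphM /= conjCi !conj_Creal ?Creal_Re ?Creal_Im //.
transitivity ('Re c * r * 'Re d + 'Im c * r * 'Im d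
  + 'i * ('Re c * r * 'Im d - 'Im c * r * 'Re d) - ('i * 'i + 1) * ('Im c * r * 'Im d)).
  by ring.
by rewrite ii addNr mul0r subr0.
Qed.

(* For symmetric M, h(M, a + i b) = h(M, a) + h(M, b) with a, b the real
   and imaginary parts of u: the cross terms cancel by symmetry. *)
Lemma hf_real_split m (M : 'M[C]_m) u : M^T = M ->
  hf M u = hf M (map_mx (fun z => 'Re z) u) + hf M (map_mx (fun z => 'Im z) u).
Proof.
move=> MT; have sym i j : M j i = M i j by rewrite -{1}MT mxE.
rewrite !hfE.
transitivity (\sum_i \sum_j ('Re (u i 0) * M i j * 'Re (u j 0))
  + \sum_i \sum_j ('Im (u i 0) * M i j * 'Im (u j 0))
  + 'i * \sum_i \sum_j ('Re (u i 0) * M i j * 'Im (u j 0) - 'Im (u i 0) * M i j * 'Re (u j 0))).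
  rewrite mulr_sumr -!big_split; apply: eq_bigr => i _.
  by rewrite mulr_sumr -!big_split; apply: eq_bigr => j _; rewrite conj_mul_expand.
have -> : \sum_i \sum_j ('Re (u i 0) * M i j * 'Im (u j 0) - 'Im (u i 0) * M i j * 'Re (u j 0)) = 0.
  under eq_bigr => i _ do rewrite sumrB.
  rewrite sumrB; apply/eqP; rewrite subr_eq0; apply/eqP.
  by rewrite exchange_big; apply: eq_bigr => i _; apply: eq_bigr => j _; rewrite /= sym; ring.
rewrite mulr0 addr0; congr (_ + _); apply: eq_bigr => i _; apply: eq_bigr => j _;
  by rewrite !mxE !conj_Creal ?Creal_Re ?Creal_Im.
Qed.

Lemma hf_real m (M : 'M[C]_m) (a : 'cV[C]_m) : (forall i, a i 0 \is Num.real) ->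
  hf M a = (a^T *m M *m a) 0 0.
Proof.
move=> ar; rewrite /hf; congr (((_)^T *m _ *m _) 0 0).
by apply/matrixP => i j; rewrite mxE (ord1 j) conj_Creal.
Qed.

Lemma hf_posdef m (M : 'M[C]_m) u : posdef M -> u != 0 -> 0 < hf M u.
Proof.
case=> _ [MT Mpos] unz; rewrite (hf_real_split _ MT) !hf_real;
  try by move=> i; rewrite mxE ?Creal_Re ?Creal_Im.
set a := map_mx _ u; set b := map_mx _ u.
have ar i : a i 0 \is Num.real by rewrite mxE Creal_Re.
have br i : b i 0 \is Num.real by rewrite mxE Creal_Im.
have ge0 (x : 'cV[C]_m) : (forall i, x i 0 \is Num.real) -> 0 <= (x^T *m M *m x) 0 0.
  move=> xr; have [->|xnz] := eqVneq x 0; first by rewrite mulmx0 mxE.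
  exact/ltW/Mpos.
have [a0|anz] := eqVneq a 0; last by apply: ltr_pwDl; [exact: Mpos | exact: ge0].
have bnz : b != 0.
  apply: contra unz => /eqP b0; apply/eqP/matrixP => i j; rewrite (ord1 j) mxE [u i 0]Crect.
  have := congr1 (fun A : 'cV[C]_m => A i 0) a0.
  have := congr1 (fun A : 'cV[C]_m => A i 0) b0.
  by rewrite !mxE => -> ->; rewrite mulr0 addr0.
by apply: ltr_wpDl; [exact: ge0 | exact: Mpos].
Qed.

Lemma hf_psd m (M : 'M[C]_m) u : possemidef M -> 0 <= hf M u.
Proof.
case=> _ [MT Mpos]; rewrite (hf_real_split _ MT) !hf_real;
  try by move=> i; rewrite mxE ?Creal_Re ?Creal_Im.
by apply: addr_ge0; apply: Mpos => i; rewrite mxE ?Creal_Re ?Creal_Im.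
Qed.

Lemma hf_inv m (M : 'M[C]_m) w : M \in unitmx ->
  hf (invmx M) (M *m w) = hf ((map_mx Num.conj M)^T) w.
Proof.
move=> Mu; rewrite /hf map_mxM trmx_mul -!mulmxA (mulmxA (invmx M)) mulVmx //.
by rewrite mul1mx !mulmxA.
Qed.

Lemma Re_hf_invmx_gt0 m (M : 'M[C]_m) u : M^T = M -> M \in unitmx -> posdef (mxRe M) ->
  u != 0 -> 0 < 'Re (hf (invmx M) u).
Proof.
move=> MT Mu Mpd unz; rewrite -(mulKVmx Mu u) hf_inv // map_trmx MT hf_Re;
  last by rewrite map_trmx MT.
have -> : mxRe (map_mx Num.conj M) = mxRe M by apply/matrixP => i j; rewrite !mxE Re_conj.
apply: hf_posdef => //; apply: contra unz => /eqP w0.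
by rewrite -(mulKVmx Mu u) w0 mulmx0.
Qed.

Lemma Re_hf_shunt_ge0 m (M : 'M[C]_m) u :
  M = 0 \/ (M^T = M /\ M \in unitmx /\ possemidef (mxRe M)) -> 0 <= 'Re (hf M u).
Proof.
case=> [->|[MT [_ Mp]]]; first by rewrite hf0 raddf0.
by rewrite hf_Re //; apply: hf_psd.
Qed.

Lemma hf_zext n p (S : {set 'I_n}) (M : 'M[C]_(n * p)) x :
  hf M (zext x) = hf (subblock S S M) x.
Proof.
have conj0 : map_mx Num.conj (0 : 'cV[C]_(#|~: S| * p)) = 0.
  by apply/matrixP => i j; rewrite !mxE rmorph0.
have conj_sub (S' : {set 'I_n}) (a : 'cV[C]_(n * p)) :
  subvec S' (map_mx Num.conj a) = map_mx Num.conj (subvec S' a).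
  by apply/matrixP => i j; rewrite !mxE.
rewrite /hf -mulmxA (dot_split S) subvec_mul !conj_sub subvec_zext subvecC_zext.
by rewrite conj0 !mulmx0 addr0 trmx0 mul0mx [(0 : 'M_1) 0 0]mxE addr0 mulmxA.
Qed.

End HermitianForm.

Section Energy.
Variable C : numClosedFieldType.

Definition blk (m p : nat) (w : 'cV[C]_(m * p)) (i : 'I_m) : 'cV[C]_p :=
  \col_q w (mxvec_index i q) 0.

Lemma hf_blkdiag m p (F : 'I_m -> 'M[C]_p) w :
  hf (blkdiag F) w = \sum_i hf (F i) (blk w i).
Proof.
rewrite hfE sum_mxvec; apply: eq_bigr => i _; rewrite hfE; apply: eq_bigr => q _.
rewrite sum_mxvec (bigD1 i) //= [X in _ + X]big1 ?addr0.
  by apply: eq_bigr => r _; rewrite !mxE !gsplitK /= eqxx mul1r.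
move=> j /negbTE ji; apply: big1 => r _.
by rewrite !mxE !gsplitK /= eq_sym ji mul0r mulr0 mul0r.
Qed.

Lemma sum_delta (W : lmodType C) m (X : 'I_m -> W) j :
  \sum_a ((a == j)%:R *: X a) = X j.
Proof.
rewrite (bigD1 j) //= eqxx scale1r [X in _ + X]big1 ?addr0 // => a /negbTE ->.
by rewrite scale0r.
Qed.

Lemma kron_mul_blk r s p (A : 'M[C]_(r, s)) (v : 'cV[C]_(s * p)) l :
  blk (kron_id p A *m v) l = \sum_a A l a *: blk v a.
Proof.
apply/matrixP => q j; rewrite (ord1 j) !mxE sum_mxvec summxE; apply: eq_bigr => a _.
rewrite (bigD1 q) //= [X in _ + X]big1 ?addr0; first by rewrite !mxE !gsplitK eqxx /= mulr1.
by move=> r' /negbTE rq; rewrite !mxE !gsplitK /= eq_sym rq mulr0 mul0r.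
Qed.

Lemma conj_kron_incidence n p (L : {set 'I_n * 'I_n}) :
  map_mx Num.conj (kron_id p (incidence C L)) = kron_id p (incidence C L).
Proof. by apply/matrixP => k l; rewrite !mxE rmorphM rmorphB !rmorph_nat. Qed.

Lemma energy n p (L : {set 'I_n * 'I_n}) (Zl : 'I_n * 'I_n -> 'M[C]_p)
  (Yt : 'I_n -> 'M[C]_p) (v : 'cV[C]_(n * p)) :
  hf (admittance L Zl Yt) v =
  \sum_(l < #|L|) hf (invmx (Zl (enum_val l))) (blk v (enum_val l).1 - blk v (enum_val l).2)
  + \sum_a hf (Yt a) (blk v a).
Proof.
rewrite /admittance hfD hf_blkdiag; congr (_ + _).
set K := kron_id p (incidence C L).
have -> : hf (K^T *m blkdiag (fun l : 'I_#|L| => invmx (Zl (enum_val l))) *m K) v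
  = hf (blkdiag (fun l : 'I_#|L| => invmx (Zl (enum_val l)))) (K *m v).
  by rewrite /hf map_mxM conj_kron_incidence trmx_mul !mulmxA.
rewrite hf_blkdiag; apply: eq_bigr => l _; congr hf.
rewrite kron_mul_blk; under eq_bigr => a _ do rewrite mxE scalerBl.
by rewrite sumrB !sum_delta.
Qed.

End Energy.

Lemma connected_const (T : Type) n (L : {set 'I_n * 'I_n}) (f : 'I_n -> T) :
  weakly_connected L -> (forall a b, (a, b) \in L -> f a = f b) -> forall i j, f i = f j.
Proof.
move=> conn edge i j; have /connectP [s pth ->] := conn i j.
elim: s i pth => [|c s IH] i //= /andP [/orP e pth].
by rewrite -(IH _ pth); case: e => /edge.
Qed.

Section Network.
Variables (C : numClosedFieldType) (n p : nat) (L : {set 'I_n * 'I_n}).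
Variables (Zl : 'I_n * 'I_n -> 'M[C]_p) (Yt : 'I_n -> 'M[C]_p).
Hypothesis branch_ok : forall l, l \in L ->
  (Zl l)^T = Zl l /\ Zl l \in unitmx /\ posdef (mxRe (Zl l)).
Hypothesis shunt_ok : forall t, Yt t = 0 \/
  ((Yt t)^T = Yt t /\ Yt t \in unitmx /\ possemidef (mxRe (Yt t))).

Local Notation Y := (admittance L Zl Yt).

Lemma energy0_branch (v : 'cV[C]_(n * p)) : 'Re (hf Y v) = 0 ->
  forall a b, (a, b) \in L -> blk v a = blk v b.
Proof.
rewrite energy raddfD !raddf_sum.
set d := fun l : 'I_#|L| => blk v (enum_val l).1 - blk v (enum_val l).2.
have branch_ge0 (l : 'I_#|L|) : 0 <= 'Re (hf (invmx (Zl (enum_val l))) (d l)).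
  have [-> | dnz] := eqVneq (d l) 0; first by rewrite hfv0 raddf0.
  have [ZT [Zu Zpd]] := branch_ok (enum_valP l).
  exact/ltW/Re_hf_invmx_gt0.
move/eqP; rewrite paddr_eq0; last 2 first.
- by apply: sumr_ge0 => l _; apply: branch_ge0.
- by apply: sumr_ge0 => a _; apply: Re_hf_shunt_ge0.
case/andP => /eqP /(psumr_eq0P (fun l _ => branch_ge0 l)) branch0 _ a b ab.
apply/eqP; rewrite -subr_eq0; apply/negPn/negP => drop_nz.
have [ZT [Zu Zpd]] := branch_ok ab.
have := branch0 (enum_rank_in ab (a, b)) isT; rewrite /d enum_rankK_in //= => /eqP.
by rewrite gt_eqF // Re_hf_invmx_gt0.
Qed.

Lemma subblock_ker0 (Z : {set 'I_n}) : weakly_connected L -> Z != setT ->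
  forall x : 'cV[C]_(#|Z| * p), subblock Z Z Y *m x = 0 -> x = 0.
Proof.
move=> conn ZnT x Yx0.
pose v := zext x.
have cst : forall i j, blk v i = blk v j.
  apply: connected_const conn _; apply: energy0_branch.
  by rewrite hf_zext /hf -mulmxA Yx0 mulmx0 mxE raddf0.
have [j0 _ j0Z] : exists2 j0, j0 \in setT & j0 \notin Z by apply/subsetPn; rewrite subTset.
have j0c : j0 \in ~: Z by rewrite in_setC.
have bj0 : blk v j0 = 0.
  apply/matrixP => q c; rewrite (ord1 c) !mxE.
  have := congr1 (fun A : 'cV[C]_(#|~: Z| * p) => A (mxvec_index (enum_rank_in j0c j0) q) 0) (subvecC_zext x).
  by rewrite !mxE sidxE enum_rankK_in.
have v0 : v = 0.
  apply/matrixP => k c; rewrite (ord1 c) -(gsplitV k).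
  by have := congr1 (fun A : 'cV[C]_p => A (gsplit k).2 0) (cst (gsplit k).1 j0); rewrite bj0 !mxE.
by rewrite -(subvec_zext x) -/v v0; apply/matrixP => i j; rewrite !mxE.
Qed.

End Network.

Lemma unitmx_ker0 (F : fieldType) m (A : 'M[F]_m) :
  (forall x : 'cV[F]_m, A *m x = 0 -> x = 0) -> A \in unitmx.
Proof.
move=> ker0; rewrite unitmxE unitfE -det_tr; apply/negP => /det0P [r rnz rA].
have : A *m r^T = 0 by rewrite -[A]trmxK -trmx_mul rA trmx0.
by move/ker0/(congr1 trmx); rewrite trmxK trmx0 => r0; rewrite r0 eqxx in rnz.
Qed.

Lemma schur_reduction (R : comUnitRingType) (a b k : nat)
  (A : 'M[R]_a) (B : 'M[R]_(a, b)) (D : 'M[R]_(b, a)) (E : 'M[R]_b)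
  (u : 'M[R]_(a, k)) (w : 'M[R]_(b, k)) :
  A \in unitmx -> A *m u + B *m w = 0 ->
  u = - (invmx A *m B *m w) /\ D *m u + E *m w = (E - D *m invmx A *m B) *m w.
Proof.
move=> Au e.
have uE : u = - (invmx A *m B *m w).
  have -> : u = invmx A *m (A *m u) by rewrite mulKmx.
  by rewrite -[A *m u]opprK (addr0_eq e) mulmxN mulmxA.
by split=> //; rewrite uE mulmxN mulmxBl !mulmxA addrC.
Qed.

Unset Implicit Arguments.
Set Strict Implicit.

Theorem lemma1 (C : numClosedFieldType) (n p : nat) (L : {set 'I_n * 'I_n})
  (Zl : 'I_n * 'I_n -> 'M[C]_p) (Yt : 'I_n -> 'M[C]_p)
  (V I : 'cV[C]_(n * p)) (Z : {set 'I_n}) :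
  weakly_connected L ->
  (forall l, l \in L ->
     (Zl l)^T = Zl l /\ Zl l \in unitmx /\ posdef (mxRe (Zl l))) ->
  (forall t, Yt t = 0 \/
     ((Yt t)^T = Yt t /\ Yt t \in unitmx /\ possemidef (mxRe (Yt t)))) ->
  I = admittance L Zl Yt *m V ->
  Z != set0 -> Z != setT ->
  subvec Z I = 0 ->
  let Y := admittance L Zl Yt in
  let YZZ := subblock Z Z Y in
  let YZc := subblock Z (~: Z) Y in
  let YcZ := subblock (~: Z) Z Y in
  let Ycc := subblock (~: Z) (~: Z) Y in
  YZZ \in unitmx /\
  subvec Z V = - (invmx YZZ *m YZc *m subvec (~: Z) V) /\
  subvec (~: Z) I = (Ycc - YcZ *m invmx YZZ *m YZc) *m subvec (~: Z) V.
Proof.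
move=> conn branch_ok shunt_ok HI _ ZnT IZ0 Y YZZ YZc YcZ Ycc.
have YZZu : YZZ \in unitmx.
  by apply: unitmx_ker0; apply: subblock_ker0.
have blockZ : YZZ *m subvec Z V + YZc *m subvec (~: Z) V = 0.
  by rewrite -IZ0 HI subvec_mul.
have [VZ Ic] := schur_reduction YcZ Ycc YZZu blockZ.
split=> //; split=> //.
by rewrite -Ic HI subvec_mul setCK; apply: addrC.
Qed.
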